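(* For all $n\ge1$, $a_{\{0101,0102,0112,0120,0121\}}(n)=(n-1)^2+1$.
   Context: An ascent in an integer sequence $s_1\cdots s_m$ is an index $j$ with $s_j<s_{j+1}$; $\mathrm{asc}$ denotes the number of ascents. An ascent sequence is a sequence $x_1\cdots x_n$ of nonnegative integers with $x_1=0$ and $x_i\le 1+\mathrm{asc}(x_1\cdots x_{i-1})$ for all $i\ge2$. The reduction $\mathrm{red}(w)$ of an integer sequence $w$ replaces the $i$-th smallest distinct letter of $w$ by $i-1$; a pattern is a reduced sequence. A sequence $x$ contains a pattern $p=p_1\cdots p_k$ if there are indices $i_1<\cdots<i_k$ with $\mathrm{red}(x_{i_1}\cdots x_{i_k})=p$; otherwise $x$ avoids $p$. For a finite set $P$ of patterns, $a_P(n)$ denotes the number of ascent sequences of length $n$ avoiding every pattern in $P$. *)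

From mathcomp Require Import all_boot.
Set Implicit Arguments. Unset Strict Implicit. Unset Printing Implicit Defensive.

Fixpoint asc (s : seq nat) : nat :=
  match s with
  | a :: ((b :: _) as t) => (a < b) + asc t
  | _ => 0
  end.

Definition ascent_seq (x : seq nat) : bool :=
  (head 0 x == 0) &&
  [forall i : 'I_(size x), (0 < i) ==> (nth 0 x i <= (asc (take i x)).+1)].

Definition red (w : seq nat) : seq nat :=
  map (fun a => index a (sort leq (undup w))) w.

Definition contains (x p : seq nat) : bool :=
  [exists m : (size x).-tuple bool, red (mask m x) == p].

Definition avoids_all (P : seq (seq nat)) (x : seq nat) : bool :=
  all (fun p => ~~ contains x p) P.

(* a_P(n): number of ascent sequences of length n avoiding every pattern of P.
   Entries of an ascent sequence of length n are < n (x_i <= i-1), so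
   enumerating n-tuples with entries in 'I_n covers all of them. *)
Definition a_P (P : seq (seq nat)) (n : nat) : nat :=
  #|[set x : n.-tuple 'I_n |
       ascent_seq (map val x) && avoids_all P (map val x)]|.

From mathcomp Require Import all_boot zify.
Set Implicit Arguments. Unset Strict Implicit. Unset Printing Implicit Defensive.

(* The avoiders of length n >= 1 are exactly 0^n, the hills 0^a 1^b 0^c (a, b >= 1) and the
   staircases 0^a 1 2 ... m m^r (a >= 1, m >= 2).  Each of the five patterns has two ascents,
   while the number of ascents is unchanged by reduction and can only drop when passing to a
   subsequence; so zeros and hills, which have at most one ascent, avoid all five.  A weakly
   increasing staircase can only contain the sorted pattern 0112, which needs a repeated letter
   below its maximum.  Conversely, appending a letter to one of these shapes either yields
   another shape or creates one of the patterns.  Grouping the shapes by the number j of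
   letters after the leading zeros gives j hills and j - 1 staircases for each 1 <= j < n,
   hence (n - 1)^2 + 1 avoiders in all. *)

Lemma containsP x p :
  reflect (exists2 s, subseq s x & red s = p) (contains x p).
Proof.
apply: (iffP existsP) => [[m /eqP <-]|[s /subseqP [m size_m ->] <-]].
  by exists (mask m x) => //; apply: mask_subseq.
have size_m' : size m == size x by apply/eqP.
by exists (Tuple size_m').
Qed.

Definition rank (s : seq nat) (a : nat) : nat := index a (sort leq (undup s)).

Lemma redE s : red s = map (rank s) s.
Proof. by []. Qed.

Lemma rank_lt s : {in s &, {mono rank s : u v / u < v}}.
Proof.
move=> u v su sv; set S := sort leq (undup s).
have [Su Sv] : u \in S /\ v \in S by rewrite !mem_sort !mem_undup.
have leS : sorted leq S := sort_sorted leq_total _.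
have ltS : sorted ltn S by rewrite ltn_sorted_uniq_leq sort_uniq undup_uniq leS.
apply/idP/idP; first exact: (sorted_ltn_index ltn_trans ltS).
by apply: contraTT; rewrite -!leqNgt; exact: (sorted_leq_index leq_trans leqnn leS).
Qed.

Lemma red_mono f s : {homo f : i j / i < j} -> red (map f s) = red s.
Proof.
move=> f_lt; have f_le := leq_mono f_lt.
rewrite /red (undup_map_inj (incn_inj f_le)) -(map_sort f_le) -map_comp.
by apply: eq_map => a /=; rewrite index_map //; apply: incn_inj.
Qed.

Lemma asc_cons2 a b s : asc [:: a, b & s] = (a < b) + asc (b :: s).
Proof. by []. Qed.

Lemma asc_rcons s v : asc (rcons s v) = asc s + (last v s < v).
Proof.
elim: s => [|a [|b t] IH]; first by rewrite /= ltnn.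
  by rewrite /= addn0.
by rewrite rcons_cons asc_cons2 -addnA -IH.
Qed.

Lemma asc_map_in f s : {in s &, {mono f : u v / u < v}} -> asc (map f s) = asc s.
Proof.
elim: s => [|a [|b t] IH] // f_mono.
have f_mono_bt : {in b :: t &, {mono f : u v / u < v}}.
  by move=> u v bu bv; apply: f_mono; rewrite inE ?bu ?bv orbT.
by rewrite map_cons asc_cons2 f_mono ?mem_head ?inE ?eqxx ?orbT // IH.
Qed.

Lemma asc_red s : asc (red s) = asc s.
Proof. by rewrite redE asc_map_in //; apply: rank_lt. Qed.

Lemma asc_cons_subseq x s t : subseq s t -> asc (x :: s) <= asc (x :: t).
Proof.
elim: t x s => [|y t IH] x [|z s] //.
rewrite [subseq _ _]/= !asc_cons2.
have [<- st|_ zst] := eqVneq z y; first by rewrite leq_add2l IH.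
rewrite -asc_cons2; apply: leq_trans (IH x _ zst) _.
case: t {IH zst} => [|w t] //.
(* Dropping y between x and w loses no ascent: x < w implies x < y or y < w. *)
rewrite !asc_cons2 addnA leq_add2r.
by case: (ltnP x y) => [//|yx]; case: (ltnP x w) => // /(leq_ltn_trans yx) ->.
Qed.

Lemma asc_subseq s t : subseq s t -> asc s <= asc t.
Proof.
case: t => [/eqP -> //|y t] st.
have := asc_cons_subseq y st; rewrite asc_cons2 ltnn add0n.
by apply: leq_trans; case: s {st} => //= z s; rewrite leq_addl.
Qed.

Lemma asc_contains x p : contains x p -> asc p <= asc x.
Proof. by case/containsP => s /asc_subseq + <-; rewrite asc_red. Qed.

Lemma avoids_all_subseq P x y : subseq x y -> avoids_all P y -> avoids_all P x.
Proof.
move=> xy /allP yP; apply/allP => p /yP; apply: contra => /containsP [s sx <-].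
by apply/containsP; exists s => //; apply: subseq_trans sx xy.
Qed.

Lemma avoids_all_red P x s : avoids_all P x -> subseq s x -> red s \notin P.
Proof.
move=> /allP xP sx; apply/negP => /xP /negP; apply.
by apply/containsP; exists s.
Qed.

Definition P5 : seq (seq nat) :=
  [:: [:: 0; 1; 0; 1]; [:: 0; 1; 0; 2]; [:: 0; 1; 1; 2];
      [:: 0; 1; 2; 0]; [:: 0; 1; 2; 1]].

Lemma avoids_P5_asc x : asc x < 2 -> avoids_all P5 x.
Proof.
move=> asc_x; apply/allP => p P5p; apply: contraL asc_x => /asc_contains.
have /allP/(_ p P5p)/eqP -> : all (fun p => asc p == 2) P5 by [].
by rewrite -leqNgt.
Qed.

Lemma avoids_P5_sorted x : sorted leq x ->
  (forall v w, 0 < v -> subseq [:: v; v; w] x -> w <= v) -> avoids_all P5 x.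
Proof.
move=> sorted_x repeat_x; apply/allP => p P5p; apply/negP => /containsP [s sx red_s].
have sorted_s : sorted leq s := subseq_sorted leq_trans sx sorted_x.
have sorted_red : sorted leq (red s).
  rewrite redE; apply: (homo_sorted_in (P := mem s)) sorted_s; last exact/allP.
  by move=> u v su sv uv; rewrite leqNgt rank_lt // -leqNgt.
have : red s \in [seq q <- P5 | sorted leq q] by rewrite mem_filter sorted_red red_s.
rewrite inE {red_s sorted_red P5p} => /eqP.
case: s sx sorted_s => [|u [|v [|w [|z [|? ?]]]]] //= sx /and4P [_ vw _ _].
set s := [:: u; v; w; z]; rewrite redE => -[rank_u rank_v rank_w rank_z].
have [su sv sw sz] : [/\ u \in s, v \in s, w \in s & z \in s].
  by rewrite !inE !eqxx !orbT.
have uv : u < v by rewrite -(rank_lt su sv) rank_u rank_v.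
have wv : w = v.
  by apply/eqP; rewrite eqn_leq vw andbT leqNgt -(rank_lt sv sw) rank_v rank_w.
have vz : v < z by rewrite -wv -(rank_lt sw sz) rank_w rank_z.
have /repeat_x : subseq [:: v; v; z] x.
  by rewrite -{2}wv; apply: subseq_trans (subseq_cons _ u) sx.
by move=> /(_ (leq_ltn_trans (leq0n u) uv)); rewrite leqNgt vz.
Qed.

Lemma ascent_seq_iota x : ascent_seq x = (head 0 x == 0) &&
  all (fun i => (0 < i) ==> (nth 0 x i <= (asc (take i x)).+1)) (iota 0 (size x)).
Proof.
congr (_ && _); apply/forallP/allP => [x_asc i|x_asc i].
  by rewrite mem_iota add0n => lt_i_x; exact: (x_asc (Ordinal lt_i_x)).
by apply: x_asc; rewrite mem_iota add0n ltn_ord.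
Qed.

Lemma ascent_seq1 v : ascent_seq [:: v] = (v == 0).
Proof. by rewrite ascent_seq_iota /= andbT. Qed.

Lemma ascent_seq_rcons y v : y != [::] ->
  ascent_seq (rcons y v) = ascent_seq y && (v <= (asc y).+1).
Proof.
move=> y0; rewrite !ascent_seq_iota size_rcons -cats1.
have -> : iota 0 (size y).+1 = rcons (iota 0 (size y)) (size y).
  by rewrite -cats1 -addn1 iotaD.
rewrite all_rcons nth_cat ltnn subnn take_size_cat //.
rewrite (eq_in_all (a2 := fun i => (0 < i) ==> (nth 0 y i <= (asc (take i y)).+1))).
  rewrite -size_eq0 -lt0n in y0; rewrite y0 implyTb andbA andbAC.
  by case: y y0.
by move=> i; rewrite mem_iota => /andP [_ lt_i]; rewrite nth_cat takel_cat ?lt_i // ltnW.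
Qed.

Lemma sorted_leq_rcons s v : sorted leq (rcons s v) = sorted leq s && (last v s <= v).
Proof. by case: s => [|x s] /=; rewrite ?leqnn // rcons_path. Qed.

Lemma nseqSr n (x : nat) : nseq n.+1 x = rcons (nseq n x) x.
Proof. by elim: n => //= n <-. Qed.

Lemma asc_nseq n x : asc (nseq n x) = 0.
Proof. by elim: n => [|[|n] IH] //; rewrite [nseq _ _]/= asc_cons2 ltnn IH. Qed.

Lemma ascent_seq_nseq n : 0 < n -> ascent_seq (nseq n 0).
Proof.
case: n => // n _; elim: n => [|n IH]; first by rewrite ascent_seq1.
by rewrite nseqSr ascent_seq_rcons // IH asc_nseq.
Qed.

Definition hill a b c : seq nat := nseq a 0 ++ nseq b 1 ++ nseq c 0.

Definition staircase a m r : seq nat := nseq a 0 ++ iota 1 m ++ nseq r m.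

Lemma size_hill a b c : size (hill a b c) = a + b + c.
Proof. by rewrite /hill !size_cat !size_nseq addnA. Qed.

Lemma size_staircase a m r : size (staircase a m r) = a + m + r.
Proof. by rewrite /staircase !size_cat !size_nseq size_iota addnA. Qed.

Lemma hill1E a : hill a 1 0 = rcons (nseq a 0) 1.
Proof. by rewrite /hill cats1. Qed.

Lemma hill_rcons0 a b c : rcons (hill a b c) 0 = hill a b c.+1.
Proof. by rewrite /hill !rcons_cat -nseqSr. Qed.

Lemma hill_rcons1 a b : rcons (hill a b 0) 1 = hill a b.+1 0.
Proof. by rewrite /hill !cats0 rcons_cat -nseqSr. Qed.

Lemma staircase0 a : staircase a 0 0 = nseq a 0.
Proof. by rewrite /staircase cats0. Qed.

Lemma staircase2E a : staircase a 2 0 = rcons (hill a 1 0) 2.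
Proof. by rewrite /staircase /hill !cats0 rcons_cat. Qed.

Lemma staircase_rcons a m r : rcons (staircase a m r) m = staircase a m r.+1.
Proof. by rewrite /staircase !rcons_cat -nseqSr. Qed.

Lemma staircase_rconsS a m : rcons (staircase a m 0) m.+1 = staircase a m.+1 0.
Proof. by rewrite /staircase !cats0 rcons_cat -[m.+1]addn1 iotaD -cats1 addnC. Qed.

Lemma asc_hill a b c : 0 < a -> 0 < b -> asc (hill a b c) = 1.
Proof.
move=> a0 b0; elim: c => [|c IH]; last by rewrite -hill_rcons0 asc_rcons IH ltn0.
case: b b0 => // b _; elim: b => [|b IH].
  by rewrite hill1E asc_rcons asc_nseq; case: a a0 => // a _; rewrite nseqSr last_rcons.
by rewrite -hill_rcons1 asc_rcons IH -hill_rcons1 last_rcons ltnn.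
Qed.

Lemma ascent_seq_hill a b c : 0 < a -> 0 < b -> ascent_seq (hill a b c).
Proof.
move=> a0 b0; have hill_nil b' c' : hill a b' c' != [::] by case: a a0.
elim: c => [|c IH]; last by rewrite -hill_rcons0 ascent_seq_rcons ?IH.
case: b b0 => // b _; elim: b => [|b IH].
  by rewrite hill1E ascent_seq_rcons ?ascent_seq_nseq // -size_eq0 size_nseq -lt0n.
by rewrite -hill_rcons1 ascent_seq_rcons ?IH.
Qed.

Lemma last_staircase d a m r : 0 < a -> last d (staircase a m r) = m.
Proof.
move=> a0; case: r => [|r]; last by rewrite -staircase_rcons last_rcons.
case: m => [|m]; last by rewrite -staircase_rconsS last_rcons.
by rewrite staircase0; case: a a0 => // a _; rewrite nseqSr last_rcons.
Qed.

Lemma asc_staircase a m r : 0 < a -> asc (staircase a m r) = m.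
Proof.
move=> a0; elim: r => [|r IH].
  elim: m => [|m IH]; first by rewrite staircase0 asc_nseq.
  by rewrite -staircase_rconsS asc_rcons IH last_staircase // ltnSn addn1.
by rewrite -staircase_rcons asc_rcons IH last_staircase // ltnn addn0.
Qed.

Lemma ascent_seq_staircase a m r : 0 < a -> ascent_seq (staircase a m r).
Proof.
move=> a0; have stair_nil m' r' : staircase a m' r' != [::] by case: a a0.
elim: r => [|r IH].
  elim: m => [|m IH]; first by rewrite staircase0 ascent_seq_nseq.
  by rewrite -staircase_rconsS ascent_seq_rcons // IH asc_staircase // ltnSn.
by rewrite -staircase_rcons ascent_seq_rcons // IH asc_staircase // leqnSn.
Qed.

Lemma sorted_staircase a m r : 0 < a -> sorted leq (staircase a m r).
Proof.
move=> a0; elim: r => [|r IH].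
  elim: m => [|m IH]; first by rewrite staircase0; elim: a {a0} => [|[|a] IH].
  by rewrite -staircase_rconsS sorted_leq_rcons IH last_staircase // leqnSn.
by rewrite -staircase_rcons sorted_leq_rcons IH last_staircase // leqnn.
Qed.

Lemma staircase_leq w a m r : w \in staircase a m r -> w <= m.
Proof. by rewrite !mem_cat !mem_nseq mem_iota => /or3P [] /andP [] _; lia. Qed.

Lemma count_staircase v a m r : 0 < v < m -> count_mem v (staircase a m r) = 1.
Proof.
move=> /andP [v0 vm]; rewrite !count_cat !count_nseq /pred1 /= (ltn_eqF v0) (gtn_eqF vm).
by rewrite count_uniq_mem ?iota_uniq // mem_iota v0 add1n ltnS ltnW.
Qed.

Lemma staircase_repeat a m r v w :
  0 < v -> subseq [:: v; v; w] (staircase a m r) -> w <= v.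
Proof.
move=> v0 sub; have w_m : w <= m.
  by apply: staircase_leq; apply: (mem_subseq sub); rewrite !inE eqxx !orbT.
apply: leq_trans w_m _; rewrite leqNgt; apply/negP => vm.
have := leq_count_subseq (pred1 v) sub.
by rewrite count_staircase ?v0 //= eqxx.
Qed.

Definition avoider x := ascent_seq x && avoids_all P5 x.

(* m > 1 keeps the families disjoint: [staircase a 1 r = hill a r.+1 0]. *)
Inductive shaped : seq nat -> Prop :=
  | ShapedZeros n of 0 < n : shaped (nseq n 0)
  | ShapedHill a b c of 0 < a & 0 < b : shaped (hill a b c)
  | ShapedStaircase a m r of 0 < a & 1 < m : shaped (staircase a m r).

Lemma shaped_avoider x : shaped x -> avoider x.
Proof.
case=> [n n0|a b c a0 b0|a m r a0 _]; rewrite /avoider.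
- by rewrite ascent_seq_nseq // avoids_P5_asc // asc_nseq.
- by rewrite ascent_seq_hill // avoids_P5_asc // asc_hill.
- rewrite ascent_seq_staircase // avoids_P5_sorted ?sorted_staircase //.
  by move=> v w; apply: staircase_repeat.
Qed.

Lemma avoider_rcons x v : x != [::] -> avoider (rcons x v) -> avoider x /\ v <= (asc x).+1.
Proof.
move=> x0 /andP [+ avoids_xv]; rewrite ascent_seq_rcons // => /andP [ascent_x v_le].
by rewrite /avoider ascent_x (avoids_all_subseq (subseq_rcons x v)).
Qed.

Lemma avoider_rcons_red x v s : avoider (rcons x v) -> subseq s x -> red (rcons s v) \notin P5.
Proof.
move=> /andP [_ avoids_xv] sx; apply: avoids_all_red avoids_xv _.
by rewrite -!cats1 cat_subseq ?subseq_refl.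
Qed.

Lemma subseq3_cat (T : eqType) (u v w : T) X Y Z :
  u \in X -> v \in Y -> w \in Z -> subseq [:: u; v; w] (X ++ Y ++ Z).
Proof.
move=> uX vY wZ; rewrite -[[:: u; v; w]]/([:: u] ++ [:: v] ++ [:: w]).
by rewrite !cat_subseq ?sub1seq.
Qed.

Definition shift0 k i := if i is 0 then 0 else i + k.

Lemma shift0_mono k : {homo shift0 k : i j / i < j}.
Proof. by move=> [|i] [|j] //= ij; rewrite ltn_add2r. Qed.

Lemma staircase_subseq_rise a m r v :
  0 < a -> 0 < v < m -> subseq [:: 0; v; v.+1] (staircase a m r).
Proof.
move=> a0 /andP [v0 vm]; rewrite /staircase.
have -> : iota 1 m = iota 1 v ++ iota v.+1 (m - v) by rewrite -iotaD subnKC // ltnW.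
rewrite -catA; apply: subseq3_cat; rewrite ?mem_cat ?mem_nseq ?mem_iota; lia.
Qed.

Lemma shaped_rcons_nseq n v :
  0 < n -> avoider (rcons (nseq n 0) v) -> shaped (rcons (nseq n 0) v).
Proof.
move=> n0 /avoider_rcons [|_]; first by rewrite -size_eq0 size_nseq -lt0n.
rewrite asc_nseq; case: v => [|[|//]] _; first by rewrite -nseqSr; apply: ShapedZeros.
by rewrite -hill1E; apply: ShapedHill.
Qed.

Lemma shaped_rcons_hill a b c v : 0 < a -> 0 < b ->
  avoider (rcons (hill a b c) v) -> shaped (rcons (hill a b c) v).
Proof.
move=> a0 b0 av_v; have [|_] := avoider_rcons _ av_v.
  by rewrite -size_eq0 size_hill -lt0n !ltn_addr.
rewrite asc_hill // => v_le.
have hill010 : 0 < c -> subseq [:: 0; 1; 0] (hill a b c).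
  by move=> c0; apply: subseq3_cat; rewrite mem_nseq ?a0 ?b0 ?c0.
case: v v_le av_v => [|[|[|//]]] _ av_v.
- by rewrite hill_rcons0; apply: ShapedHill.
- case: c => [|c] in hill010 av_v *; first by rewrite hill_rcons1; apply: ShapedHill.
  by case/negP: (avoider_rcons_red av_v (hill010 isT)).
case: c => [|c] in hill010 av_v *; last first.
  by case/negP: (avoider_rcons_red av_v (hill010 isT)).
case: b b0 {hill010} => [|[|b]] // _ in av_v *.
  by rewrite -staircase2E; apply: ShapedStaircase.
have hill011 : subseq [:: 0; 1; 1] (hill a b.+2 0).
  change (subseq [:: 0; 1; 1] (nseq a 0 ++ [:: 1] ++ (1 :: nseq b 1) ++ [::])).
  by apply: subseq3_cat; rewrite ?mem_nseq ?a0 ?inE.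
by case/negP: (avoider_rcons_red av_v hill011).
Qed.

Lemma shaped_rcons_staircase a m r v : 0 < a -> 1 < m ->
  avoider (rcons (staircase a m r) v) -> shaped (rcons (staircase a m r) v).
Proof.
move=> a0 m1 av_v; have [|_] := avoider_rcons _ av_v.
  by rewrite -size_eq0 size_staircase -lt0n !ltn_addr.
rewrite asc_staircase // => v_le.
case: (ltngtP v m) => [v_lt_m|m_lt_v|->]; last first.
- by rewrite staircase_rcons; apply: ShapedStaircase.
- have v_eq : v = m.+1 by apply/eqP; rewrite eqn_leq v_le m_lt_v.
  subst v; case: r => [|r] in av_v *.
    by rewrite staircase_rconsS; apply: ShapedStaircase; rewrite // ltnW.
  case: m m1 {v_le m_lt_v} => // m _ in av_v *.
  have stair0mm : subseq [:: 0; m.+1; m.+1] (staircase a m.+1 r.+1).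
    by apply: subseq3_cat; rewrite ?mem_nseq ?mem_iota ?a0 ?eqxx //; lia.
  case/negP: (avoider_rcons_red av_v stair0mm).
  by rewrite -[rcons _ _]/(map (shift0 m) [:: 0; 1; 1; 2]) red_mono //; apply: shift0_mono.
case: v => [|v] in v_le v_lt_m av_v *.
  by case/negP: (avoider_rcons_red av_v (staircase_subseq_rise r a0 (m1 : 0 < 1 < m))).
have /(staircase_subseq_rise r a0) stair_rise : 0 < v.+1 < m by [].
case/negP: (avoider_rcons_red av_v stair_rise).
by rewrite -[rcons _ _]/(map (shift0 v) [:: 0; 1; 2; 1]) red_mono //; apply: shift0_mono.
Qed.

Lemma shaped_rcons x v : shaped x -> avoider (rcons x v) -> shaped (rcons x v).
Proof.
case=> [n n0|a b c a0 b0|a m r a0 m1].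
- exact: shaped_rcons_nseq.
- exact: shaped_rcons_hill.
- exact: shaped_rcons_staircase.
Qed.

Lemma avoider_shaped x : x != [::] -> avoider x -> shaped x.
Proof.
elim/last_ind: x => [//|x v IH] _ av_v.
have [x0|x0] := eqVneq x [::].
  move: av_v; rewrite x0 /avoider /= ascent_seq1 => /andP [/eqP -> _].
  exact: (@ShapedZeros 1).
have [av_x _] := avoider_rcons x0 av_v.
exact: shaped_rcons (IH x0 av_x) av_v.
Qed.

Definition hills n : seq (seq nat) :=
  [seq hill (n - j) b (j - b) | j <- iota 0 n, b <- iota 1 j].

Definition staircases n : seq (seq nat) :=
  [seq staircase (n - j) m (j - m) | j <- iota 0 n, m <- iota 2 j.-1].

Definition shapes n : seq (seq nat) := nseq n 0 :: hills n ++ staircases n.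

Lemma sumn_iota_odd n : sumn (iota 0 n) + sumn [seq j.-1 | j <- iota 0 n] = (n - 1) ^ 2.
Proof.
elim: n => // n IH; rewrite -addn1 iotaD map_cat !sumn_cat /= add0n.
by case: n IH => [|n] //=; nia.
Qed.

Lemma size_shapes n : size (shapes n) = (n - 1) ^ 2 + 1.
Proof.
rewrite /= size_cat !size_allpairs_dep addn1 -sumn_iota_odd.
by rewrite (eq_map (size_iota 1)) map_id (eq_map (fun j => size_iota 2 j.-1)).
Qed.

Lemma mem_hills n x :
  x \in hills n -> exists j b, [/\ x = hill (n - j) b (j - b), j < n & 0 < b <= j].
Proof.
case/allpairsPdep => j [b [+ + ->]]; rewrite !mem_iota => jn bj.
by exists j, b; split => //; lia.
Qed.

Lemma mem_staircases n x :
  x \in staircases n -> exists j m, [/\ x = staircase (n - j) m (j - m), j < n & 1 < m <= j].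
Proof.
case/allpairsPdep => j [m [+ + ->]]; rewrite !mem_iota => jn mj.
by exists j, m; split => //; lia.
Qed.

Lemma shapes_shaped n x : 0 < n -> x \in shapes n -> shaped x /\ size x = n.
Proof.
move=> n0; rewrite inE mem_cat => /or3P [/eqP ->|/mem_hills|/mem_staircases].
- by split; [apply: ShapedZeros | rewrite size_nseq].
- case=> j [b [-> jn /andP [b0 bj]]].
  by split; [apply: ShapedHill | rewrite size_hill]; lia.
- case=> j [m [-> jn /andP [m1 mj]]].
  by split; [apply: ShapedStaircase | rewrite size_staircase]; lia.
Qed.

Lemma shaped_shapes x : shaped x -> x \in shapes (size x).
Proof.
case=> [n _|a b c a0 b0|a m r a0 m1]; first by rewrite size_nseq mem_head.
- rewrite size_hill !inE mem_cat; apply/or3P/Or32/allpairsPdep.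
  by exists (b + c), b; rewrite !mem_iota; split; [lia | lia | congr hill; lia].
- rewrite size_staircase !inE mem_cat; apply/or3P/Or33/allpairsPdep.
  by exists (m + r), m; rewrite !mem_iota; split; [lia | lia | congr staircase; lia].
Qed.

Lemma find_nseq0_cat a s : find (predC1 0) (nseq a 0 ++ s) = a + find (predC1 0) s.
Proof. by elim: a => //= a ->. Qed.

Lemma uniq_hills n : uniq (hills n).
Proof.
apply: allpairs_uniq_dep => [|j _|]; rewrite ?iota_uniq //.
move=> _ _ /allpairsPdep [j [b [jn bj ->]]] /allpairsPdep [j' [b' [jn' bj' ->]]] /=.
move: jn bj jn' bj'; rewrite !mem_iota => jn bj jn' bj' eq_hill.
have := congr1 (count_mem 1) eq_hill; have := congr1 (find (predC1 0)) eq_hill.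
rewrite /hill !find_nseq0_cat !count_cat !count_nseq /=.
case: b b' bj bj' {eq_hill} => [|b] [|b'] //= bj bj' lead_eq ones_eq.
by have [<- <-] : j = j' /\ b = b' by lia.
Qed.

Lemma uniq_staircases n : uniq (staircases n).
Proof.
apply: allpairs_uniq_dep => [|j _|]; rewrite ?iota_uniq //.
move=> _ _ /allpairsPdep [j [m [jn mj ->]]] /allpairsPdep [j' [m' [jn' mj' ->]]] /=.
move: jn mj jn' mj'; rewrite !mem_iota => jn mj jn' mj' eq_stair.
have m_eq : m = m'.
  by move/(congr1 (last 0)): eq_stair; rewrite !last_staircase ?subn_gt0.
subst m'; have := congr1 (find (predC1 0)) eq_stair.
rewrite /staircase !find_nseq0_cat; case: m mj {mj' eq_stair} => [|m] //= mj lead_eq.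
by have <- : j = j' by lia.
Qed.

Lemma uniq_shapes n : uniq (shapes n).
Proof.
have one_hill x : x \in hills n -> (1 \in x) && (2 \notin x).
  by case/mem_hills => j [b [-> _ b0]]; rewrite /hill !mem_cat !mem_nseq; lia.
have two_staircase x : x \in staircases n -> 2 \in x.
  by case/mem_staircases => j [m [-> _ m1]]; rewrite /staircase !mem_cat mem_iota; lia.
rewrite cons_uniq cat_uniq uniq_hills uniq_staircases andbT mem_cat negb_or.
apply/and3P; split=> //.
  apply/andP; split; apply/negP; first by move=> /one_hill; rewrite !mem_nseq !andbF.
  by move=> /two_staircase; rewrite mem_nseq andbF.
by apply/hasPn => x /two_staircase x2; apply/negP => /one_hill; rewrite x2 andbF.
Qed.

Lemma asc_size s : asc s <= (size s).-1.
Proof.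
elim: s => [|a [|b s] IH] //.
by rewrite asc_cons2; exact: (leq_add (leq_b1 _) IH).
Qed.

Lemma ascent_seq_ltn x : ascent_seq x -> all (gtn (size x)) x.
Proof.
move=> /andP [/eqP x0 /forallP x_asc]; apply/(all_nthP 0) => -[|i] lt_i.
  by rewrite nth0 x0.
have x_i : nth 0 x i.+1 <= (asc (take i.+1 x)).+1 := x_asc (Ordinal lt_i).
have := asc_size (take i.+1 x); rewrite size_take lt_i /=; lia.
Qed.

Lemma card_tuples_enum k n (P : pred (seq nat)) (L : seq (seq nat)) : uniq L ->
  (forall x, (x \in L) = [&& size x == n, all (gtn k) x & P x]) ->
  #|[set t : n.-tuple 'I_k | P (map val t)]| = size L.
Proof.
move=> uniq_L mem_L; pose h (t : n.-tuple 'I_k) := map val t.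
have inj_h : injective h by move=> t u /(inj_map val_inj) /val_inj.
rewrite cardE -(size_map h); apply/perm_size/uniq_perm => //.
  by rewrite map_inj_uniq ?enum_uniq.
move=> x; rewrite mem_L; apply/mapP/and3P => [[t + ->]|[/eqP size_x all_x Px]].
  rewrite mem_enum inE /h size_map size_tuple all_map => Pt; split=> //.
  by apply/allP => i _; apply: ltn_ord.
have val_x : map val (pmap (insub : nat -> option 'I_k) x) = x.
  rewrite (pmap_filter (@insubK _ _ _)); apply/all_filterP.
  by apply: sub_all all_x => u u_k; rewrite insubT.
have size_t : size (pmap (insub : nat -> option 'I_k) x) == n.
  by rewrite -(size_map val) val_x size_x.
by exists (Tuple size_t); rewrite ?mem_enum ?inE /h /= val_x.
Qed.

Theorem theorem5p3 (n : nat) : 1 <= n ->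
  a_P [:: [:: 0; 1; 0; 1]; [:: 0; 1; 0; 2]; [:: 0; 1; 1; 2];
          [:: 0; 1; 2; 0]; [:: 0; 1; 2; 1]] n = (n - 1) ^ 2 + 1.
Proof.
move=> n0; rewrite -size_shapes.
apply: (card_tuples_enum (P := avoider)) (uniq_shapes n) _ => x.
apply/idP/and3P => [/(shapes_shaped n0) [/shaped_avoider av_x <-]|].
  by split=> //; apply: ascent_seq_ltn; case/andP: av_x.
case=> /eqP size_x _ av_x; rewrite -size_x; apply/shaped_shapes/avoider_shaped => //.
by rewrite -size_eq0 size_x -lt0n.
Qed.
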